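(* For any disjoint nonempty sets $T,B\subseteq[d]$, the function $\theta\mapsto\log\mathbb{P}_\theta(B\prec T)$ is concave on $\mathbb{R}^d$. Consequently, the order-$M$ rank-breaking log-likelihood $\mathcal{L}_{\rm RB}(\theta)=\sum_{j=1}^n\sum_{a=1}^{\ell_j}\log\mathbb{P}_\theta(e_{j,a})$ is concave in $\theta\in\mathbb{R}^d$ for any collection of edges $e_{j,a}$.
   Context: PL model: items $[d]$, parameter $\theta\in\mathbb{R}^d$; when a set $S$ is offered, a ranking $\sigma:[|S|]\to S$ (position 1 most preferred) is drawn with probability $\prod_{i=1}^{|S|-1}e^{\theta_{\sigma(i)}}/\sum_{i'=i}^{|S|}e^{\theta_{\sigma(i')}}$. For disjoint nonempty $T,B\subseteq[d]$, $\mathbb{P}_\theta(B\prec T)=\sum_{\sigma}\prod_{u=1}^{|T|}\frac{e^{\theta_{\sigma(u)}}}{\sum_{c=u}^{|T|}e^{\theta_{\sigma(c)}}+\sum_{i\in B}e^{\theta_i}}$ (sum over all orderings $\sigma$ of $T$), the PL probability that, when $T\cup B$ is offered, every item of $T$ is ranked above every item of $B$. An edge $e_{j,a}$ is such a pair $(B,T)$ and $\mathbb{P}_\theta(e_{j,a})=\mathbb{P}_\theta(B\prec T)$. *)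

From Stdlib Require Import Reals List.
Import ListNotations.
Open Scope R_scope.

(* Items of [d] are the naturals 0..d-1; a parameter theta in R^d is a
   function nat -> R (only coordinates < d are ever used). *)

Fixpoint insert_all {A : Type} (x : A) (l : list A) : list (list A) :=
  match l with
  | [] => [[x]]
  | y :: l' => (x :: y :: l') :: map (cons y) (insert_all x l')
  end.

Fixpoint perms {A : Type} (l : list A) : list (list A) :=
  match l with
  | [] => [[]]
  | x :: l' => flat_map (insert_all x) (perms l')
  end.

Definition sum_list (l : list R) : R := fold_right Rplus 0 l.

Definition sumexp (theta : nat -> R) (S : list nat) : R :=
  sum_list (map (fun i => exp (theta i)) S).

Fixpoint seq_prob (theta : nat -> R) (B : list nat) (sigma : list nat) : R :=
  match sigma with
  | [] => 1
  | x :: rest =>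
      exp (theta x) / (sumexp theta (x :: rest) + sumexp theta B)
      * seq_prob theta B rest
  end.

Definition prob_BT (theta : nat -> R) (B T : list nat) : R :=
  sum_list (map (seq_prob theta B) (perms T)).

Definition valid_pair (d : nat) (B T : list nat) : Prop :=
  T <> [] /\ B <> [] /\ NoDup T /\ NoDup B /\
  (forall i, In i T -> (i < d)%nat) /\ (forall i, In i B -> (i < d)%nat) /\
  (forall i, In i T -> ~ In i B).

Definition concave (f : (nat -> R) -> R) : Prop :=
  forall (th1 th2 : nat -> R) (t : R), 0 <= t <= 1 ->
    t * f th1 + (1 - t) * f th2 <= f (fun i => t * th1 i + (1 - t) * th2 i).

(* An edge e = (B, T); edges.(j) = [e_{j,1}; ...; e_{j,l_j}]. *)
Definition L_RB (edges : list (list (list nat * list nat))) (theta : nat -> R) : R :=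
  sum_list (map (fun ej => sum_list (map (fun e => ln (prob_BT theta (fst e) (snd e))) ej))
                edges).

From Stdlib Require Import Reals List Lra Lia Wf_nat Permutation.
From Stdlib Require Import ClassicalEpsilon Ranalysis5 FunctionalExtensionality.
From Coquelicot Require Import Coquelicot.
Import ListNotations.
Open Scope R_scope.

(* Write λ_i = e^{θ_i}, μ = Σ_{i∈B} λ_i and w_i = θ_i - ln μ. In the exponential-race
   picture of the Plackett–Luce model item i finishes at an Exp(λ_i) time, and the time
   change x = e^s / μ turns P_θ(B ≺ T) into
       ∫_ℝ e^{s - e^s} Π_{t∈T} φ(w_t + s) ds,      φ(x) = 1 - exp (- e^x).
   φ is nondecreasing and log-concave, and θ ↦ w_t is concave because log-sum-exp is convex, so
   the integrand is jointly log-concave in (θ, s), and by the one-dimensional Prékopa–Leindler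
   inequality its integral over s is log-concave in θ.
   The integral formula is not imported from probability: on [-n-1, n+1], differentiating
   e^{-e^s} Π_{t∈T} φ(w_t + s) reproduces the first-choice recursion of the Plackett–Luce
   model, and letting n → ∞ identifies the limit with P_θ(B ≺ T). *)

Lemma sum_list_app (a b : list R) : sum_list (a ++ b) = sum_list a + sum_list b.
Proof. induction a as [|x a IH]; simpl; [ring | rewrite IH; ring]. Qed.

Section SumList.
Context {A : Type}.

Lemma sum_list_flat_map {C : Type} (f : C -> R) (g : A -> list C) (l : list A) :
  sum_list (map f (flat_map g l)) = sum_list (map (fun x => sum_list (map f (g x))) l).
Proof. induction l as [|x l IH]; simpl; [reflexivity|]. now rewrite map_app, sum_list_app, IH. Qed.

Lemma sum_list_map_ext_in (f g : A -> R) (l : list A) :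
  (forall x, In x l -> f x = g x) -> sum_list (map f l) = sum_list (map g l).
Proof. intros H; now rewrite (map_ext_in f g l H). Qed.

Lemma sum_list_scal_l (c : R) (f : A -> R) (l : list A) :
  sum_list (map (fun x => c * f x) l) = c * sum_list (map f l).
Proof. induction l as [|x l IH]; simpl; [ring | rewrite IH; ring]. Qed.

Lemma sum_list_plus (f g : A -> R) (l : list A) :
  sum_list (map (fun x => f x + g x) l) = sum_list (map f l) + sum_list (map g l).
Proof. induction l as [|x l IH]; simpl; [ring | rewrite IH; ring]. Qed.

Lemma sum_list_le (f g : A -> R) (l : list A) :
  (forall x, f x <= g x) -> sum_list (map f l) <= sum_list (map g l).
Proof. intros H; induction l as [|x l IH]; simpl; [lra|]. specialize (H x); lra. Qed.

Lemma sum_list_pos (f : A -> R) (l : list A) :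
  l <> [] -> (forall x, 0 < f x) -> 0 < sum_list (map f l).
Proof.
  intros Hl Hf; induction l as [|x [|y l] IH]; [congruence | simpl; specialize (Hf x); lra |].
  specialize (IH ltac:(discriminate)); specialize (Hf x); simpl in *; lra.
Qed.

End SumList.

Fixpoint selections {A : Type} (l : list A) : list (A * list A) :=
  match l with
  | [] => []
  | a :: l' => (a, l') :: map (fun p => (fst p, a :: snd p)) (selections l')
  end.

Section Permutations.
Context {A : Type}.

Lemma sum_perms_selections (l : list A) (f : list A -> R) : l <> [] ->
  sum_list (map f (perms l)) =
  sum_list (map (fun p => sum_list (map (fun r => f (fst p :: r)) (perms (snd p))))
                (selections l)).
Proof.
  revert f; induction l as [|a [|b l] IH]; intros f Hl; [congruence | simpl; ring |].
  (* Inserting [a] at the head gives [f (a :: s)]; the other insertions keep the head of [s]. *)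
  pose (g := fun s => match s with
                      | [] => 0
                      | y :: s' => sum_list (map (fun t => f (y :: t)) (insert_all a s'))
                      end).
  assert (Hins : forall s, sum_list (map f (insert_all a s)) = f (a :: s) + g s).
  { intros [|y s]; simpl; [ring | now rewrite map_map]. }
  change (perms (a :: b :: l)) with (flat_map (insert_all a) (perms (b :: l))).
  rewrite sum_list_flat_map, (sum_list_map_ext_in _ _ _ (fun s _ => Hins s)), sum_list_plus.
  rewrite (IH g) by discriminate.
  change (selections (a :: b :: l))
    with ((a, b :: l) :: map (fun p => (fst p, a :: snd p)) (selections (b :: l))).
  cbn [map fst snd]; change (sum_list (?x :: ?r)) with (x + sum_list r).
  rewrite map_map; f_equal.
  apply sum_list_map_ext_in; intros [x r] _; cbn [fst snd].
  change (perms (a :: r)) with (flat_map (insert_all a) (perms r)).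
  now rewrite sum_list_flat_map.
Qed.

Lemma insert_all_Permutation (a : A) (s t : list A) :
  In t (insert_all a s) -> Permutation (a :: s) t.
Proof.
  revert t; induction s as [|y s IH]; simpl; intros t Ht.
  - now destruct Ht as [<- | []].
  - destruct Ht as [<- | Ht]; [reflexivity|].
    apply in_map_iff in Ht as [t' [<- Ht']].
    eapply perm_trans; [apply perm_swap | now apply perm_skip, IH].
Qed.

Lemma perms_Permutation (l s : list A) : In s (perms l) -> Permutation l s.
Proof.
  revert s; induction l as [|a l IH]; simpl; intros s Hs.
  - now destruct Hs as [<- | []].
  - apply in_flat_map in Hs as [r [Hr Hs]].
    eapply perm_trans; [apply perm_skip, IH, Hr | now apply insert_all_Permutation].
Qed.

Lemma selections_Permutation (l : list A) (x : A) (r : list A) :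
  In (x, r) (selections l) -> Permutation l (x :: r).
Proof.
  revert x r; induction l as [|a l IH]; simpl; intros x r H; [contradiction|].
  destruct H as [H | H]; [now inversion H|].
  apply in_map_iff in H as [[x' r'] [H1 H2]]; inversion H1; subst.
  eapply perm_trans; [apply perm_skip, IH, H2 | apply perm_swap].
Qed.

Lemma perms_neq_nil (l : list A) : perms l <> [].
Proof.
  induction l as [|a l IH]; simpl; [discriminate|].
  destruct (perms l) as [|[|y s] ps]; [congruence | discriminate | discriminate].
Qed.

End Permutations.

Lemma sumexp_Permutation (th : nat -> R) (l l' : list nat) :
  Permutation l l' -> sumexp th l = sumexp th l'.
Proof. intros H; induction H; unfold sumexp in *; simpl in *; lra. Qed.

Lemma sumexp_nonneg (th : nat -> R) (l : list nat) : 0 <= sumexp th l.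
Proof.
  induction l as [|i l IH]; unfold sumexp in *; simpl; [lra|].
  pose proof (exp_pos (th i)); lra.
Qed.

Lemma sumexp_pos (th : nat -> R) (l : list nat) : l <> [] -> 0 < sumexp th l.
Proof.
  destruct l as [|i l]; [congruence|]; intros _.
  pose proof (sumexp_nonneg th l); pose proof (exp_pos (th i)).
  unfold sumexp in *; simpl; lra.
Qed.

Lemma seq_prob_pos (th : nat -> R) (B s : list nat) : 0 < seq_prob th B s.
Proof.
  induction s as [|x s IH]; simpl; [lra|].
  pose proof (sumexp_pos th (x :: s) ltac:(discriminate)); pose proof (sumexp_nonneg th B).
  pose proof (exp_pos (th x)).
  apply Rmult_lt_0_compat; [apply Rdiv_lt_0_compat; lra | exact IH].
Qed.

Lemma prob_BT_pos (th : nat -> R) (B T : list nat) : 0 < prob_BT th B T.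
Proof. apply sum_list_pos; [apply perms_neq_nil | apply seq_prob_pos]. Qed.

Definition first_choice_sum (w : nat -> R) (T : list nat) (F : list nat -> R) : R :=
  sum_list (map (fun p => exp (w (fst p)) * F (snd p)) (selections T)).

Lemma prob_BT_first_choice (th : nat -> R) (B T : list nat) : T <> [] ->
  prob_BT th B T * (sumexp th T + sumexp th B) = first_choice_sum th T (prob_BT th B).
Proof.
  intros HT; unfold first_choice_sum, prob_BT at 1; rewrite sum_perms_selections by exact HT.
  assert (Hpos : 0 < sumexp th T + sumexp th B)
    by (pose proof (sumexp_pos th T HT); pose proof (sumexp_nonneg th B); lra).
  rewrite Rmult_comm, <- sum_list_scal_l.
  apply sum_list_map_ext_in; intros [x r] Hsel; simpl.
  unfold prob_BT; rewrite <- !sum_list_scal_l.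
  apply sum_list_map_ext_in; intros rho Hrho; simpl.
  rewrite (sumexp_Permutation th (x :: rho) T); [field; lra|].
  symmetry; eapply perm_trans;
    [apply selections_Permutation, Hsel | now apply perm_skip, perms_Permutation].
Qed.

Lemma exp_le_mono (x y : R) : x <= y -> exp x <= exp y.
Proof. intros [H | ->]; [left; now apply exp_increasing | lra]. Qed.

Lemma ln_le_inv (x y : R) : 0 < x -> 0 < y -> ln x <= ln y -> x <= y.
Proof.
  intros Hx Hy H; rewrite <- (exp_ln x), <- (exp_ln y) by assumption; now apply exp_le_mono.
Qed.

Lemma concave_of_derivative_nonincreasing (g g' : R -> R) :
  (forall x, derivable_pt_lim g x (g' x)) ->
  (forall x y, x <= y -> g' y <= g' x) ->
  forall x y t, 0 <= t <= 1 -> t * g x + (1 - t) * g y <= g (t * x + (1 - t) * y).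
Proof.
  intros Hd Hm.
  (* The mean value theorem on [x, z] and [z, y] compares both chords with the slope at z. *)
  assert (Hlt : forall x y t, x < y -> 0 < t < 1 ->
            t * g x + (1 - t) * g y <= g (t * x + (1 - t) * y)).
  { intros x y t Hxy Ht; set (z := t * x + (1 - t) * y).
    assert (Hxz : x < z) by (unfold z; nra).
    assert (Hzy : z < y) by (unfold z; nra).
    destruct (MVT_cor2 g g' x z Hxz (fun c _ => Hd c)) as [c1 [E1 H1]].
    destruct (MVT_cor2 g g' z y Hzy (fun c _ => Hd c)) as [c2 [E2 H2]].
    assert (g' z <= g' c1) by (apply Hm; lra).
    assert (g' c2 <= g' z) by (apply Hm; lra).
    assert (Ezx : z - x = (1 - t) * (y - x)) by (unfold z; ring).
    assert (Eyz : y - z = t * (y - x)) by (unfold z; ring).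
    assert (g z - g x >= g' z * (z - x)) by (rewrite E1; apply Rle_ge, Rmult_le_compat_r; lra).
    assert (g y - g z <= g' z * (y - z)) by (rewrite E2; apply Rmult_le_compat_r; lra).
    rewrite Ezx, Eyz in *; nra. }
  intros x y t Ht.
  destruct (Req_dec t 0) as [-> | H0]; [replace (0 * x + (1 - 0) * y) with y by ring; lra|].
  destruct (Req_dec t 1) as [-> | H1]; [replace (1 * x + (1 - 1) * y) with x by ring; lra|].
  destruct (Rtotal_order x y) as [Hxy | [-> | Hxy]].
  - apply Hlt; lra.
  - replace (t * y + (1 - t) * y) with y by ring; lra.
  - replace (t * x + (1 - t) * y) with ((1 - t) * y + (1 - (1 - t)) * x) by ring.
    pose proof (Hlt y x (1 - t) Hxy ltac:(lra)); lra.
Qed.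

Lemma exp_convex (x y t : R) : 0 <= t <= 1 ->
  exp (t * x + (1 - t) * y) <= t * exp x + (1 - t) * exp y.
Proof.
  intros Ht.
  assert (H := concave_of_derivative_nonincreasing (fun x => - exp x) (fun x => - exp x)
    (fun x => derivable_pt_lim_opp _ _ _ (derivable_pt_lim_exp x))
    (fun x y Hxy => Ropp_le_contravar _ _ (exp_le_mono _ _ Hxy)) x y t Ht).
  lra.
Qed.

Lemma ln_concave (p q t : R) : 0 < p -> 0 < q -> 0 <= t <= 1 ->
  t * ln p + (1 - t) * ln q <= ln (t * p + (1 - t) * q).
Proof.
  intros Hp Hq Ht; rewrite <- (ln_exp (t * ln p + (1 - t) * ln q)).
  apply ln_le; [apply exp_pos|].
  pose proof (exp_convex (ln p) (ln q) t Ht) as H; now rewrite !exp_ln in H.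
Qed.

Lemma ln_sumexp_convex (th1 th2 : nat -> R) (t : R) (B : list nat) :
  B <> [] -> 0 <= t <= 1 ->
  ln (sumexp (fun i => t * th1 i + (1 - t) * th2 i) B)
  <= t * ln (sumexp th1 B) + (1 - t) * ln (sumexp th2 B).
Proof.
  intros HB Ht.
  assert (Hm1 := sumexp_pos th1 B HB); assert (Hm2 := sumexp_pos th2 B HB).
  set (m1 := sumexp th1 B) in *; set (m2 := sumexp th2 B) in *.
  set (K := exp (t * ln m1 + (1 - t) * ln m2)).
  (* Each term is at most K times the convex combination of the normalized weights,
     which sum to 1. *)
  assert (Hterm : forall i, exp (t * th1 i + (1 - t) * th2 i)
                   <= K * (t * (/ m1 * exp (th1 i)) + (1 - t) * (/ m2 * exp (th2 i)))).
  { intros i.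
    replace (t * th1 i + (1 - t) * th2 i) with
      ((t * ln m1 + (1 - t) * ln m2) + (t * (th1 i - ln m1) + (1 - t) * (th2 i - ln m2))) by ring.
    rewrite exp_plus; apply Rmult_le_compat_l; [left; apply exp_pos|].
    pose proof (exp_convex (th1 i - ln m1) (th2 i - ln m2) t Ht) as Hc.
    assert (Eq : forall a m, 0 < m -> exp (a - ln m) = / m * exp a).
    { intros a m Hm; unfold Rminus; rewrite exp_plus, exp_Ropp, exp_ln by exact Hm; ring. }
    now rewrite !Eq in Hc. }
  assert (Hle : sumexp (fun i => t * th1 i + (1 - t) * th2 i) B <= K).
  { eapply Rle_trans; [apply (sum_list_le _ _ B Hterm)|].
    rewrite sum_list_scal_l, sum_list_plus, !sum_list_scal_l.
    fold (sumexp th1 B) (sumexp th2 B) m1 m2.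
    replace (t * (/ m1 * m1) + (1 - t) * (/ m2 * m2)) with 1 by (field; lra); lra. }
  apply Rle_trans with (ln K); [apply ln_le; [now apply sumexp_pos | exact Hle]|].
  unfold K; rewrite ln_exp; lra.
Qed.

(* [gumbel_cdf (w + s) = 1 - exp (- λ x)] is the probability that a clock of rate
   [λ = e^w] has rung by time [x = e^s]. *)
Definition gumbel_cdf (x : R) : R := 1 - exp (- exp x).

Lemma gumbel_cdf_pos (x : R) : 0 < gumbel_cdf x.
Proof.
  unfold gumbel_cdf; pose proof (exp_pos x).
  assert (exp (- exp x) < 1) by (rewrite <- exp_0; apply exp_increasing; lra); lra.
Qed.

Lemma gumbel_cdf_lt_1 (x : R) : gumbel_cdf x < 1.
Proof. unfold gumbel_cdf; pose proof (exp_pos (- exp x)); lra. Qed.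

Lemma gumbel_cdf_le_exp (x : R) : gumbel_cdf x <= exp x.
Proof. unfold gumbel_cdf; pose proof (exp_ineq1_le (- exp x)); lra. Qed.

Lemma gumbel_cdf_le (x y : R) : x <= y -> gumbel_cdf x <= gumbel_cdf y.
Proof.
  intros H; unfold gumbel_cdf.
  pose proof (exp_le_mono (- exp y) (- exp x) (Ropp_le_contravar _ _ (exp_le_mono _ _ H))); lra.
Qed.

Lemma ln_gumbel_cdf_le (x y : R) : x <= y -> ln (gumbel_cdf x) <= ln (gumbel_cdf y).
Proof. intros H; apply ln_le; [apply gumbel_cdf_pos | now apply gumbel_cdf_le]. Qed.

Lemma derivable_pt_lim_gumbel_cdf_shift (c s : R) :
  derivable_pt_lim (fun s => gumbel_cdf (c + s)) s (exp s * exp c * (1 - gumbel_cdf (c + s))).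
Proof. apply is_derive_Reals; unfold gumbel_cdf; auto_derive; [easy|]. rewrite exp_plus; ring. Qed.

Lemma exp_chord_slope_le (v1 v2 : R) : 0 < v1 -> v1 <= v2 ->
  v2 * (exp v1 - 1) <= v1 * (exp v2 - 1).
Proof.
  intros H1 H2; set (s := v1 / v2).
  assert (Hs : 0 <= s <= 1).
  { unfold s; split; [apply Rlt_le, Rdiv_lt_0_compat; lra|].
    apply Rmult_le_reg_r with v2; [lra|].
    unfold Rdiv; rewrite Rmult_assoc, Rinv_l by lra; lra. }
  pose proof (exp_convex v2 0 s Hs) as H; rewrite exp_0 in H.
  replace (s * v2 + (1 - s) * 0) with v1 in H by (unfold s; field; lra).
  assert (v2 * exp v1 <= v2 * (s * exp v2 + (1 - s) * 1)) by (apply Rmult_le_compat_l; lra).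
  replace (v2 * (s * exp v2 + (1 - s) * 1)) with (v1 * exp v2 + v2 - v1) in *
    by (unfold s; field; lra).
  lra.
Qed.

Lemma ln_gumbel_cdf_concave (x y t : R) : 0 <= t <= 1 ->
  t * ln (gumbel_cdf x) + (1 - t) * ln (gumbel_cdf y)
  <= ln (gumbel_cdf (t * x + (1 - t) * y)).
Proof.
  apply (concave_of_derivative_nonincreasing (fun x => ln (gumbel_cdf x))
           (fun x => exp x * exp (- exp x) / (1 - exp (- exp x)))); clear x y t.
  - intros x; apply is_derive_Reals.
    pose proof (gumbel_cdf_pos x); unfold gumbel_cdf in *.
    auto_derive; [lra|]; field; lra.
  - intros x y Hxy.
    (* With [v = e^x] the derivative is [v / (e^v - 1)], nonincreasing by convexity of exp. *)
    assert (E : forall v, 0 < v -> v * exp (- v) / (1 - exp (- v)) = v / (exp v - 1)).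
    { intros v Hv; assert (exp v > 1) by (rewrite <- exp_0; apply exp_increasing; lra).
      rewrite exp_Ropp; field; lra. }
    assert (Hv1 : 0 < exp x) by apply exp_pos.
    assert (Hv : exp x <= exp y) by now apply exp_le_mono.
    rewrite !E by lra.
    assert (exp (exp x) > 1) by (rewrite <- exp_0; apply exp_increasing; lra).
    assert (exp (exp y) > 1) by (rewrite <- exp_0; apply exp_increasing; lra).
    pose proof (exp_chord_slope_le (exp x) (exp y) Hv1 Hv).
    apply Rmult_le_reg_r with ((exp (exp x) - 1) * (exp (exp y) - 1)); [nra|].
    field_simplify; lra.
Qed.

Lemma ex_RInt_continuous_R (f : R -> R) (u v : R) :
  (forall x, continuous f x) -> ex_RInt f u v.
Proof. intros Hf; apply (@ex_RInt_continuous R_CompleteNormedModule); intros; apply Hf. Qed.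

Lemma continuous_of_continuity_pt (f : R -> R) (x : R) : continuity_pt f x -> continuous f x.
Proof. apply continuity_pt_filterlim. Qed.

Section Quantile.
Variable f : R -> R.
Variables a b : R.
Hypothesis Hab : a < b.
Hypothesis f_cont : forall x, continuous f x.
Hypothesis f_pos : forall x, 0 < f x.

Let mass := RInt f a b.
Let cdf (x : R) := RInt f a x / mass.

Let mass_pos : 0 < mass.
Proof. apply RInt_gt_0; auto. Qed.

Let cdf_derive (x : R) : derivable_pt_lim cdf x (f x / mass).
Proof.
  apply is_derive_Reals; unfold cdf, Rdiv.
  apply (is_derive_ext (fun x => scal (/ mass) (RInt f a x))).
  { intros; unfold scal; simpl; unfold mult; simpl; ring. }
  replace (f x * / mass) with (scal (/ mass) (f x))
    by (unfold scal; simpl; unfold mult; simpl; ring).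
  apply is_derive_scal, is_derive_RInt with a; [|apply f_cont].
  apply filter_forall; intros.
  now apply (@RInt_correct R_CompleteNormedModule), ex_RInt_continuous_R.
Qed.

Let cdf_cont (x : R) : continuity_pt cdf x.
Proof. apply derivable_continuous_pt; exists (f x / mass); apply cdf_derive. Qed.

Let cdf_increasing (x y : R) : x < y -> cdf x < cdf y.
Proof.
  intros H; unfold cdf.
  rewrite <- (RInt_Chasles f a x y) by now apply ex_RInt_continuous_R.
  assert (0 < RInt f x y) by (apply RInt_gt_0; auto).
  unfold plus; simpl; apply Rmult_lt_compat_r; [apply Rinv_0_lt_compat, mass_pos | lra].
Qed.

Let cdf_a : cdf a = 0.
Proof. unfold cdf; rewrite RInt_point; unfold zero; simpl; unfold Rdiv; ring. Qed.

Let cdf_b : cdf b = 1.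
Proof. unfold cdf; fold mass; field; pose proof mass_pos; lra. Qed.

(* The inverse is taken on the wider interval [a - 1, b + 1], so that [0] and [1] are
   interior points of its domain and it is differentiable there. *)
Let lo := a - 1.
Let hi := b + 1.

Let cdf_inverse_ex (tau : R) :
  exists z, cdf lo <= tau <= cdf hi -> lo <= z <= hi /\ cdf z = tau.
Proof.
  destruct (Rle_dec (cdf lo) tau) as [H1 | H1]; [|exists 0; intros; lra].
  destruct (Rle_dec tau (cdf hi)) as [H2 | H2]; [|exists 0; intros; lra].
  assert (Hcont : continuity (fun z => cdf z - tau))
    by (intros z; apply continuity_pt_minus;
        [apply cdf_cont | apply continuity_pt_const; now intros u v]).
  destruct (IVT_cor _ lo hi Hcont ltac:(unfold lo, hi; lra) ltac:(nra)) as [z [Hz1 Hz2]].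
  exists z; intros _; split; [exact Hz1 | lra].
Qed.

Let quantile (tau : R) : R :=
  proj1_sig (constructive_indefinite_description _ (cdf_inverse_ex tau)).

Let quantile_spec (tau : R) :
  cdf lo <= tau <= cdf hi -> lo <= quantile tau <= hi /\ cdf (quantile tau) = tau.
Proof. unfold quantile; destruct (constructive_indefinite_description _ _) as [z Hz]; exact Hz. Qed.

Let quantile_cdf (x : R) : lo <= x <= hi -> quantile (cdf x) = x.
Proof.
  intros H.
  assert (Hx : cdf lo <= cdf x <= cdf hi).
  { split; [destruct (Req_dec lo x) as [<- | ] | destruct (Req_dec x hi) as [-> | ]];
      try lra; left; apply cdf_increasing; lra. }
  destruct (quantile_spec _ Hx) as [Hq Hcq].
  destruct (Rtotal_order (quantile (cdf x)) x) as [Hlt | [Heq | Hgt]]; [| exact Heq |];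
    [pose proof (cdf_increasing _ _ Hlt) | pose proof (cdf_increasing _ _ Hgt)]; lra.
Qed.

Let cdf_lo_hi : cdf lo < 0 /\ 1 < cdf hi.
Proof.
  rewrite <- cdf_a, <- cdf_b; split; apply cdf_increasing; unfold lo, hi; lra.
Qed.

Let quantile_cont (tau : R) : cdf lo < tau < cdf hi -> continuity_pt quantile tau.
Proof.
  intros H; apply (continuity_pt_recip_interv cdf quantile lo hi ltac:(unfold lo, hi; lra)).
  - intros; apply cdf_increasing; lra.
  - intros x H1 H2; unfold comp, id; apply quantile_spec; lra.
  - intros x H1 H2; apply quantile_spec; lra.
  - intros; apply cdf_cont.
  - exact H.
Qed.

Let quantile_derive (tau : R) :
  cdf lo < tau < cdf hi -> derivable_pt_lim quantile tau (mass / f (quantile tau)).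
Proof.
  intros H.
  pose (Prf := fun (x : R) (_ : quantile (cdf lo) <= x <= quantile (cdf hi)) =>
                 exist (fun l => derivable_pt_lim cdf x l) (f x / mass) (cdf_derive x)).
  assert (Hin : quantile (cdf lo) <= quantile tau <= quantile (cdf hi)).
  { rewrite !quantile_cdf by (unfold lo, hi; lra); apply quantile_spec; lra. }
  pose proof mass_pos; pose proof (f_pos (quantile tau)).
  replace (mass / f (quantile tau)) with (1 / (f (quantile tau) / mass)) by (field; lra).
  apply (derivable_pt_lim_recip_interv cdf quantile (cdf lo) (cdf hi) tau Prf
           (quantile_cont tau H) ltac:(lra) H Hin).
  - intros x Hx; unfold comp, id; apply quantile_spec; lra.
  - apply Rgt_not_eq, Rdiv_lt_0_compat; lra.
Qed.

Lemma exists_transport_to_uniform :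
  exists X : R -> R, X 0 = a /\ X 1 = b /\
    forall tau, 0 <= tau <= 1 ->
      derivable_pt_lim X tau (RInt f a b / f (X tau)) /\ continuity_pt X tau.
Proof.
  destruct cdf_lo_hi as [Hlo Hhi]; exists quantile; repeat split.
  - rewrite <- cdf_a; apply quantile_cdf; unfold lo, hi; lra.
  - rewrite <- cdf_b; apply quantile_cdf; unfold lo, hi; lra.
  - apply quantile_derive; lra.
  - apply quantile_cont; lra.
Qed.

End Quantile.

(* Weighted AM-GM: the Jacobian [t If/p + (1-t) Ig/q] dominates [(If/p)^t (Ig/q)^(1-t)]. *)
Lemma prekopa_leindler_pointwise (p q r If Ig t : R) :
  0 <= t <= 1 -> 0 < p -> 0 < q -> 0 < r -> 0 < If -> 0 < Ig ->
  t * ln p + (1 - t) * ln q <= ln r ->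
  exp (t * ln If + (1 - t) * ln Ig) <= r * (t * (If / p) + (1 - t) * (Ig / q)).
Proof.
  intros Ht Hp Hq Hr HIf HIg Hkey.
  assert (Hf : 0 < If / p) by now apply Rdiv_lt_0_compat.
  assert (Hg : 0 < Ig / q) by now apply Rdiv_lt_0_compat.
  assert (Hm : 0 < t * (If / p) + (1 - t) * (Ig / q)).
  { destruct (Rle_lt_or_eq_dec 0 t (proj1 Ht)) as [Ht0 | <-]; [|lra].
    pose proof (Rmult_lt_0_compat _ _ Ht0 Hf).
    pose proof (Rmult_le_pos (1 - t) _ ltac:(lra) (Rlt_le _ _ Hg)); lra. }
  apply ln_le_inv; [apply exp_pos | now apply Rmult_lt_0_compat |].
  rewrite ln_exp, ln_mult by assumption.
  pose proof (ln_concave (If / p) (Ig / q) t Hf Hg Ht) as Hc.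
  rewrite !ln_div in Hc by assumption; lra.
Qed.

Lemma continuity_pt_div_comp (F X : R -> R) (c x : R) :
  continuous F (X x) -> F (X x) <> 0 -> continuity_pt X x ->
  continuity_pt (fun tau => c / F (X tau)) x.
Proof.
  intros HF HF0 HX; apply (continuity_pt_comp X (fun u => c / F u)); [exact HX|].
  apply continuity_pt_div; [apply continuity_pt_const; now intros u v | | exact HF0].
  now apply continuity_pt_filterlim.
Qed.

(* One-dimensional Prékopa–Leindler on [a, b]: transport [f] and [g] to the uniform law by
   their quantile functions [X] and [Y], and change variables along [t X + (1 - t) Y]. *)
Lemma prekopa_leindler (f g h : R -> R) (a b t : R) :
  a < b -> 0 < t < 1 ->
  (forall x, continuous f x) -> (forall x, continuous g x) -> (forall x, continuous h x) ->
  (forall x, 0 < f x) -> (forall x, 0 < g x) -> (forall x, 0 < h x) ->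
  (forall x y, t * ln (f x) + (1 - t) * ln (g y) <= ln (h (t * x + (1 - t) * y))) ->
  t * ln (RInt f a b) + (1 - t) * ln (RInt g a b) <= ln (RInt h a b).
Proof.
  intros Hab Ht Hcf Hcg Hch Hpf Hpg Hph Hkey.
  destruct (exists_transport_to_uniform f a b Hab Hcf Hpf) as [X [X0 [X1 HX]]].
  destruct (exists_transport_to_uniform g a b Hab Hcg Hpg) as [Y [Y0 [Y1 HY]]].
  set (If := RInt f a b) in *; set (Ig := RInt g a b) in *.
  assert (HIf : 0 < If) by (apply RInt_gt_0; auto).
  assert (HIg : 0 < Ig) by (apply RInt_gt_0; auto).
  set (Z := fun tau => t * X tau + (1 - t) * Y tau).
  set (dZ := fun tau => t * (If / f (X tau)) + (1 - t) * (Ig / g (Y tau))).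
  assert (HZ : forall tau, Rmin 0 1 <= tau <= Rmax 0 1 ->
                is_derive Z tau (dZ tau) /\ continuous dZ tau).
  { intros tau Htau; rewrite Rmin_left, Rmax_right in Htau by lra.
    destruct (HX tau Htau) as [DX CX]; destruct (HY tau Htau) as [DY CY].
    pose proof (Hpf (X tau)); pose proof (Hpg (Y tau)).
    split.
    - apply is_derive_Reals, derivable_pt_lim_plus; now apply derivable_pt_lim_scal.
    - apply continuous_of_continuity_pt.
      apply (continuity_pt_plus (fun tau => t * (If / f (X tau)))
                                (fun tau => (1 - t) * (Ig / g (Y tau))));
        apply (continuity_pt_scal (fun tau => _ / _ (_ tau))), continuity_pt_div_comp; auto; lra. }
  pose proof (is_RInt_comp h Z dZ 0 1 (fun x _ => Hch (Z x)) HZ) as HI.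
  replace (Z 0) with a in HI by (unfold Z; rewrite X0, Y0; ring).
  replace (Z 1) with b in HI by (unfold Z; rewrite X1, Y1; ring).
  set (C := exp (t * ln If + (1 - t) * ln Ig)).
  assert (HC : C <= RInt h a b).
  { rewrite <- (is_RInt_unique _ _ _ _ HI).
    replace C with (RInt (fun _ => C) 0 1)
      by (rewrite RInt_const; unfold scal; simpl; unfold mult; simpl; ring).
    apply RInt_le; [lra | apply ex_RInt_const | now exists (RInt h a b) |].
    intros tau _; unfold scal, Z, dZ; simpl; unfold mult; simpl; rewrite Rmult_comm.
    apply prekopa_leindler_pointwise; auto; lra. }
  replace (t * ln If + (1 - t) * ln Ig) with (ln C) by (unfold C; now rewrite ln_exp).
  apply ln_le; [apply exp_pos | exact HC].
Qed.

Section FirstChoiceSum.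
Variables (w : nat -> R) (l : list nat).

Lemma continuity_pt_first_choice_sum (K : list nat -> R -> R) (s : R) :
  (forall r, continuity_pt (K r) s) ->
  continuity_pt (fun s => first_choice_sum w l (fun r => K r s)) s.
Proof.
  intros HK; unfold first_choice_sum; induction (selections l) as [|p ps IH]; simpl.
  - apply continuity_pt_const; now intros u v.
  - apply (continuity_pt_plus (fun s => exp (w (fst p)) * K (snd p) s)
             (fun s => sum_list (map (fun p => exp (w (fst p)) * K (snd p) s) ps)));
      [apply (continuity_pt_scal (K (snd p))), HK | exact IH].
Qed.

Lemma is_RInt_first_choice_sum (K : list nat -> R -> R) (a b : R) :
  (forall r s, continuity_pt (K r) s) ->
  is_RInt (fun s => first_choice_sum w l (fun r => K r s)) a b
          (first_choice_sum w l (fun r => RInt (K r) a b)).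
Proof.
  intros HK; unfold first_choice_sum; induction (selections l) as [|p ps IH]; simpl.
  - pose proof (@is_RInt_const R_NormedModule a b 0) as H0.
    change (scal (b - a) 0) with ((b - a) * 0) in H0; now rewrite Rmult_0_r in H0.
  - apply (is_RInt_plus (V := R_NormedModule) (fun s => exp (w (fst p)) * K (snd p) s));
      [|exact IH].
    apply (is_RInt_scal (V := R_NormedModule) (K (snd p)) a b).
    apply (@RInt_correct R_CompleteNormedModule), ex_RInt_continuous_R.
    intros; now apply continuous_of_continuity_pt.
Qed.

Lemma is_lim_seq_first_choice_sum (u : list nat -> nat -> R) (lim : list nat -> R) :
  (forall x r, In (x, r) (selections l) -> is_lim_seq (u r) (lim r)) ->
  is_lim_seq (fun n => first_choice_sum w l (fun r => u r n)) (first_choice_sum w l lim).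
Proof.
  unfold first_choice_sum; induction (selections l) as [|[x r] ps IH]; intros Hl; simpl;
    [apply is_lim_seq_const|].
  apply is_lim_seq_plus'; [apply (is_lim_seq_scal_l _ (exp (w x)) (lim r)), (Hl x); now left|].
  apply IH; intros y q Hq; apply (Hl y); now right.
Qed.

End FirstChoiceSum.

(* With [w = θ - ln μ_B] and time [e^s / μ_B], [gumbel_prod T w s] is the probability that
   every item of [T] has finished, [race_density] adds the density of the first finish in [B],
   and [race_tail] is the probability that moreover no item of [B] has finished yet. *)
Definition gumbel_prod (l : list nat) (w : nat -> R) (s : R) : R :=
  fold_right (fun i acc => gumbel_cdf (w i + s) * acc) 1 l.
Definition race_density (l : list nat) (w : nat -> R) (s : R) : R :=
  exp (s - exp s) * gumbel_prod l w s.
Definition race_tail (l : list nat) (w : nat -> R) (s : R) : R :=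
  exp (- exp s) * gumbel_prod l w s.

Lemma gumbel_prod_pos (l : list nat) (w : nat -> R) (s : R) : 0 < gumbel_prod l w s.
Proof. induction l as [|i l IH]; simpl; [lra|]. pose proof (gumbel_cdf_pos (w i + s)); nra. Qed.

Lemma gumbel_prod_le_1 (l : list nat) (w : nat -> R) (s : R) : gumbel_prod l w s <= 1.
Proof.
  induction l as [|i l IH]; simpl; [lra|].
  pose proof (gumbel_cdf_pos (w i + s)); pose proof (gumbel_cdf_lt_1 (w i + s)).
  pose proof (gumbel_prod_pos l w s); nra.
Qed.

Lemma race_density_pos (l : list nat) (w : nat -> R) (s : R) : 0 < race_density l w s.
Proof. apply Rmult_lt_0_compat; [apply exp_pos | apply gumbel_prod_pos]. Qed.

Lemma derivable_pt_lim_gumbel_prod (l : list nat) (w : nat -> R) (s : R) :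
  derivable_pt_lim (gumbel_prod l w) s
    (exp s * (first_choice_sum w l (fun r => gumbel_prod r w s) - sumexp w l * gumbel_prod l w s)).
Proof.
  induction l as [|i l IH].
  - unfold first_choice_sum, sumexp; simpl; replace (exp s * (0 - 0 * 1)) with 0 by ring.
    apply derivable_pt_lim_const.
  - refine (eq_ind _ (derivable_pt_lim _ s) (derivable_pt_lim_mult _ _ s _ _
              (derivable_pt_lim_gumbel_cdf_shift (w i) s) IH) _ _).
    unfold first_choice_sum.
    change (selections (i :: l)) with ((i, l) :: map (fun p => (fst p, i :: snd p)) (selections l)).
    change (sumexp w (i :: l)) with (exp (w i) + sumexp w l).
    change (gumbel_prod (i :: l) w s) with (gumbel_cdf (w i + s) * gumbel_prod l w s).
    rewrite map_cons, map_map; cbn [fst snd].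
    change (sum_list (?x :: ?r)) with (x + sum_list r).
    rewrite (sum_list_map_ext_in (fun p => exp (w (fst p)) * gumbel_prod (i :: snd p) w s)
               (fun p => gumbel_cdf (w i + s) * (exp (w (fst p)) * gumbel_prod (snd p) w s)))
      by (intros; simpl; ring).
    rewrite sum_list_scal_l; ring.
Qed.

Lemma derivable_pt_lim_race_tail (l : list nat) (w : nat -> R) (s : R) :
  derivable_pt_lim (race_tail l w) s
    (- (1 + sumexp w l) * race_density l w s + first_choice_sum w l (fun r => race_density r w s)).
Proof.
  assert (Dexp : derivable_pt_lim (fun s => exp (- exp s)) s (- exp s * exp (- exp s)))
    by (apply is_derive_Reals; auto_derive; [easy | ring]).
  refine (eq_ind _ (derivable_pt_lim _ s)
            (derivable_pt_lim_mult _ _ s _ _ Dexp (derivable_pt_lim_gumbel_prod l w s)) _ _).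
  assert (Edens : forall r, race_density r w s = exp s * exp (- exp s) * gumbel_prod r w s)
    by (intros r; unfold race_density, Rminus; rewrite exp_plus; ring).
  unfold first_choice_sum.
  rewrite (sum_list_map_ext_in (fun p => exp (w (fst p)) * race_density (snd p) w s)
             (fun p => exp s * exp (- exp s) * (exp (w (fst p)) * gumbel_prod (snd p) w s)))
    by (intros; rewrite Edens; ring).
  rewrite sum_list_scal_l, Edens; ring.
Qed.

Lemma race_density_cont (l : list nat) (w : nat -> R) (s : R) : continuity_pt (race_density l w) s.
Proof.
  apply (continuity_pt_mult (fun s => exp (s - exp s)) (gumbel_prod l w)).
  - apply derivable_continuous_pt; eexists; apply is_derive_Reals; auto_derive; easy.
  - apply derivable_continuous_pt; eexists; apply derivable_pt_lim_gumbel_prod.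
Qed.

Lemma race_tail_ftc (l : list nat) (w : nat -> R) (a b : R) :
  - (1 + sumexp w l) * RInt (race_density l w) a b
  + first_choice_sum w l (fun r => RInt (race_density r w) a b)
  = race_tail l w b - race_tail l w a.
Proof.
  set (dtail := fun s => - (1 + sumexp w l) * race_density l w s
                         + first_choice_sum w l (fun r => race_density r w s)).
  assert (Hint : is_RInt (V := R_NormedModule) dtail a b
     (- (1 + sumexp w l) * RInt (race_density l w) a b
      + first_choice_sum w l (fun r => RInt (race_density r w) a b))).
  { apply (is_RInt_plus (V := R_NormedModule) (fun s => - (1 + sumexp w l) * race_density l w s)).
    - apply (is_RInt_scal (V := R_NormedModule) (race_density l w) a b).
      apply (@RInt_correct R_CompleteNormedModule), ex_RInt_continuous_R.
      intros; apply continuous_of_continuity_pt, race_density_cont.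
    - apply (is_RInt_first_choice_sum w l (fun r => race_density r w)).
      intros; apply race_density_cont. }
  assert (Hcont : forall s, continuity_pt dtail s).
  { intros s; apply (continuity_pt_plus (fun s => - (1 + sumexp w l) * race_density l w s)).
    - apply (continuity_pt_scal (race_density l w)), race_density_cont.
    - apply (continuity_pt_first_choice_sum w l (fun r => race_density r w)).
      intros; apply race_density_cont. }
  rewrite <- (is_RInt_unique _ _ _ _ Hint).
  rewrite (is_RInt_unique _ _ _ _
             (is_RInt_derive (V := R_CompleteNormedModule) (race_tail l w) dtail a b
                (fun s _ => proj2 (is_derive_Reals _ _ _) (derivable_pt_lim_race_tail l w s))
                (fun s _ => continuous_of_continuity_pt _ _ (Hcont s)))).
  unfold minus, plus, opp; simpl; ring.
Qed.

Lemma is_lim_seq_exp_neg : is_lim_seq (fun n => exp (- (INR n + 1))) 0.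
Proof.
  assert (Hinf : is_lim_seq (fun n => INR n + 1) p_infty).
  { apply (is_lim_seq_ext (fun n => INR (S n))); [intros; apply S_INR|].
    apply (is_lim_seq_incr_1 INR p_infty), is_lim_seq_INR. }
  apply (is_lim_seq_le_le (fun _ => 0) _ (fun n => / (INR n + 1)));
    [| apply is_lim_seq_const | exact (is_lim_seq_inv _ _ Hinf ltac:(discriminate))].
  intros n; pose proof (pos_INR n); split; [left; apply exp_pos|].
  rewrite exp_Ropp; apply Rinv_le_contravar; [lra|].
  pose proof (exp_ineq1_le (INR n + 1)); lra.
Qed.

Lemma race_tail_lim_p_infty (l : list nat) (w : nat -> R) :
  is_lim_seq (fun n => race_tail l w (INR n + 1)) 0.
Proof.
  apply (is_lim_seq_le_le (fun _ => 0) _ (fun n => exp (- (INR n + 1))));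
    [| apply is_lim_seq_const | apply is_lim_seq_exp_neg].
  intros n; unfold race_tail; set (x := INR n + 1).
  pose proof (gumbel_prod_pos l w x); pose proof (gumbel_prod_le_1 l w x).
  pose proof (exp_pos (- exp x)).
  assert (exp (- exp x) <= exp (- x)) by (apply exp_le_mono; pose proof (exp_ineq1_le x); lra).
  split; nra.
Qed.

(* As [s -> -oo] no clock has rung yet. *)
Lemma race_tail_lim_m_infty (l : list nat) (w : nat -> R) :
  is_lim_seq (fun n => race_tail l w (- (INR n + 1))) (match l with [] => 1 | _ :: _ => 0 end : R).
Proof.
  destruct l as [|i l].
  - apply (is_lim_seq_ext (fun n => exp (- exp (- (INR n + 1)))));
      [intros n; unfold race_tail; simpl; ring|].
    assert (Hc : continuity_pt (fun v => exp (- v)) 0)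
      by (apply derivable_continuous_pt; eexists; apply is_derive_Reals; auto_derive; easy).
    pose proof (is_lim_seq_continuous _ _ 0 Hc is_lim_seq_exp_neg) as HL.
    cbv beta in HL; now rewrite Ropp_0, exp_0 in HL.
  - apply (is_lim_seq_le_le (fun _ => 0) _ (fun n => exp (w i) * exp (- (INR n + 1))));
      [| apply is_lim_seq_const |].
    + intros n; unfold race_tail; set (x := - (INR n + 1)).
      change (gumbel_prod (i :: l) w x) with (gumbel_cdf (w i + x) * gumbel_prod l w x).
      pose proof (gumbel_prod_pos l w x); pose proof (gumbel_prod_le_1 l w x).
      pose proof (gumbel_cdf_pos (w i + x)); pose proof (gumbel_cdf_le_exp (w i + x)) as Hle.
      rewrite exp_plus in Hle.
      pose proof (exp_pos (- exp x)).
      assert (exp (- exp x) <= 1)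
        by (rewrite <- exp_0; apply exp_le_mono; pose proof (exp_pos x); lra).
      assert (exp (- exp x) * (gumbel_cdf (w i + x) * gumbel_prod l w x)
              <= 1 * (gumbel_cdf (w i + x) * 1)) by (apply Rmult_le_compat; nra).
      split; [apply Rlt_le, Rmult_lt_0_compat; [| apply Rmult_lt_0_compat] | ]; lra.
    + replace 0 with (exp (w i) * 0) by ring.
      apply (is_lim_seq_scal_l _ (exp (w i)) 0), is_lim_seq_exp_neg.
Qed.

Definition trunc_integral (n : nat) (l : list nat) (w : nat -> R) : R :=
  RInt (race_density l w) (- (INR n + 1)) (INR n + 1).

Definition shifted (th : nat -> R) (B : list nat) (i : nat) : R := th i - ln (sumexp th B).

Lemma exp_shifted (th : nat -> R) (B : list nat) (i : nat) :
  B <> [] -> exp (shifted th B i) = exp (th i) / sumexp th B.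
Proof.
  intros HB; unfold shifted, Rminus.
  now rewrite exp_plus, exp_Ropp, exp_ln by now apply sumexp_pos.
Qed.

Lemma sumexp_shifted (th : nat -> R) (B l : list nat) :
  B <> [] -> sumexp (shifted th B) l = sumexp th l / sumexp th B.
Proof.
  intros HB; pose proof (sumexp_pos th B HB).
  induction l as [|i l IH]; [change (sumexp ?w []) with 0; field; lra|].
  change (sumexp ?w (i :: l)) with (exp (w i) + sumexp w l).
  rewrite IH, exp_shifted by exact HB; field; lra.
Qed.

Lemma prob_BT_shifted_recursion (th : nat -> R) (B T : list nat) : B <> [] ->
  prob_BT th B T =
  (first_choice_sum (shifted th B) T (prob_BT th B) + match T with [] => 1 | _ :: _ => 0 end)
  / (1 + sumexp (shifted th B) T).
Proof.
  intros HB; pose proof (sumexp_pos th B HB) as Hmu.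
  destruct T as [|i T']; [unfold prob_BT, first_choice_sum, sumexp; simpl; field|].
  rewrite sumexp_shifted by exact HB.
  assert (E : first_choice_sum (shifted th B) (i :: T') (prob_BT th B)
              = / sumexp th B * first_choice_sum th (i :: T') (prob_BT th B)).
  { unfold first_choice_sum; rewrite <- sum_list_scal_l; apply sum_list_map_ext_in.
    intros; rewrite exp_shifted by exact HB; unfold Rdiv; ring. }
  rewrite E, <- prob_BT_first_choice by discriminate.
  pose proof (sumexp_nonneg th (i :: T')); field; lra.
Qed.

Lemma trunc_integral_recursion (n : nat) (l : list nat) (w : nat -> R) :
  trunc_integral n l w =
  (first_choice_sum w l (fun r => trunc_integral n r w)
   - (race_tail l w (INR n + 1) - race_tail l w (- (INR n + 1)))) / (1 + sumexp w l).
Proof.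
  pose proof (sumexp_nonneg w l).
  unfold trunc_integral; rewrite <- race_tail_ftc.
  generalize (RInt (race_density l w) (- (INR n + 1)) (INR n + 1) : R); intros I.
  field; lra.
Qed.

Lemma trunc_integral_lim (th : nat -> R) (B T : list nat) : B <> [] ->
  is_lim_seq (fun n => trunc_integral n T (shifted th B)) (prob_BT th B T).
Proof.
  intros HB; remember (length T) as k eqn:Hk; revert T Hk.
  induction k as [k IH] using lt_wf_ind; intros T Hk.
  rewrite (prob_BT_shifted_recursion th B T HB).
  set (w := shifted th B).
  apply (is_lim_seq_ext _ _ _ (fun n => eq_sym (trunc_integral_recursion n T w))).
  pose proof (sumexp_nonneg w T).
  apply is_lim_seq_div'; [| apply is_lim_seq_const | lra].
  set (tail := match T with [] => 1 | _ :: _ => 0 end).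
  replace tail with (- (0 - tail)) by ring.
  apply is_lim_seq_minus'; [| apply is_lim_seq_minus';
                                [apply race_tail_lim_p_infty | apply race_tail_lim_m_infty]].
  apply is_lim_seq_first_choice_sum; intros x r Hsel; apply (IH (length r)); [|reflexivity].
  pose proof (Permutation_length (selections_Permutation _ _ _ Hsel)); simpl in *; lia.
Qed.

Section LogConcavity.
Variables (t : R) (w1 w2 wt : nat -> R).
Hypothesis Ht : 0 <= t <= 1.
Hypothesis Hw : forall i, t * w1 i + (1 - t) * w2 i <= wt i.

Lemma ln_gumbel_prod_mix (l : list nat) (x y : R) :
  t * ln (gumbel_prod l w1 x) + (1 - t) * ln (gumbel_prod l w2 y)
  <= ln (gumbel_prod l wt (t * x + (1 - t) * y)).
Proof.
  induction l as [|i l IH]; simpl; [rewrite ln_1; lra|].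
  rewrite !ln_mult by (apply gumbel_cdf_pos || apply gumbel_prod_pos).
  pose proof (ln_gumbel_cdf_concave (w1 i + x) (w2 i + y) t Ht).
  assert (ln (gumbel_cdf (t * (w1 i + x) + (1 - t) * (w2 i + y)))
          <= ln (gumbel_cdf (wt i + (t * x + (1 - t) * y))))
    by (apply ln_gumbel_cdf_le; specialize (Hw i); lra).
  lra.
Qed.

Lemma ln_race_density_mix (l : list nat) (x y : R) :
  t * ln (race_density l w1 x) + (1 - t) * ln (race_density l w2 y)
  <= ln (race_density l wt (t * x + (1 - t) * y)).
Proof.
  unfold race_density; rewrite !ln_mult, !ln_exp by (apply exp_pos || apply gumbel_prod_pos).
  pose proof (ln_gumbel_prod_mix l x y); pose proof (exp_convex x y t Ht); lra.
Qed.

Lemma ln_trunc_integral_mix (n : nat) (l : list nat) : 0 < t < 1 ->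
  t * ln (trunc_integral n l w1) + (1 - t) * ln (trunc_integral n l w2)
  <= ln (trunc_integral n l wt).
Proof.
  intros Ht'; pose proof (pos_INR n).
  apply prekopa_leindler; try lra;
    try (intros; apply continuous_of_continuity_pt, race_density_cont);
    try (intros; apply race_density_pos).
  apply ln_race_density_mix.
Qed.

End LogConcavity.

Lemma shifted_mix (th1 th2 : nat -> R) (t : R) (B : list nat) (i : nat) :
  B <> [] -> 0 <= t <= 1 ->
  t * shifted th1 B i + (1 - t) * shifted th2 B i
  <= shifted (fun j => t * th1 j + (1 - t) * th2 j) B i.
Proof. intros HB Ht; pose proof (ln_sumexp_convex th1 th2 t B HB Ht); unfold shifted; lra. Qed.

Lemma concave_ln_prob_BT (B T : list nat) : B <> [] -> concave (fun th => ln (prob_BT th B T)).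
Proof.
  intros HB th1 th2 t Ht.
  set (tht := fun i => t * th1 i + (1 - t) * th2 i).
  destruct (Req_dec t 0) as [-> | H0].
  { replace tht with th2 by (apply functional_extensionality; intros; unfold tht; ring); lra. }
  destruct (Req_dec t 1) as [-> | H1].
  { replace tht with th1 by (apply functional_extensionality; intros; unfold tht; ring); lra. }
  assert (Hln : forall th, is_lim_seq (fun n => ln (trunc_integral n T (shifted th B)))
                                      (ln (prob_BT th B T))).
  { intros th; apply is_lim_seq_continuous; [|now apply trunc_integral_lim].
    apply derivable_continuous_pt; exists (/ prob_BT th B T).
    apply derivable_pt_lim_ln, prob_BT_pos. }
  assert (Hlim := is_lim_seq_plus' _ _ _ _
                    (is_lim_seq_mult' _ _ _ _ (is_lim_seq_const t) (Hln th1))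
                    (is_lim_seq_mult' _ _ _ _ (is_lim_seq_const (1 - t)) (Hln th2))).
  assert (Hmix := ln_trunc_integral_mix t _ _ (shifted tht B) Ht
                   (fun i => shifted_mix th1 th2 t B i HB Ht)).
  exact (is_lim_seq_le _ _ _ _ (fun n => Hmix n T ltac:(lra)) Hlim (Hln tht)).
Qed.

Lemma concave_sum_list {X : Type} (L : list X) (fs : X -> (nat -> R) -> R) :
  (forall x, In x L -> concave (fs x)) -> concave (fun th => sum_list (map (fun x => fs x th) L)).
Proof.
  induction L as [|a L IH]; intros H th1 th2 t Ht; simpl; [lra|].
  pose proof (H a (or_introl eq_refl) th1 th2 t Ht).
  pose proof (IH (fun x Hx => H x (or_intror Hx)) th1 th2 t Ht); simpl in *; lra.
Qed.

Theorem mainTheorem3 (d : nat) :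
  (forall B T : list nat, valid_pair d B T ->
     concave (fun theta => ln (prob_BT theta B T)))
  /\
  (forall edges : list (list (list nat * list nat)),
     (forall ej e, In ej edges -> In e ej -> valid_pair d (fst e) (snd e)) ->
     concave (L_RB edges)).
Proof.
  split.
  - intros B T [_ [HB _]]; now apply concave_ln_prob_BT.
  - intros edges Hedges; unfold L_RB.
    apply (concave_sum_list edges
             (fun ej th => sum_list (map (fun e => ln (prob_BT th (fst e) (snd e))) ej))).
    intros ej Hej.
    apply (concave_sum_list ej (fun e th => ln (prob_BT th (fst e) (snd e)))).
    intros e He; destruct (Hedges ej e Hej He) as [_ [HB _]]; now apply concave_ln_prob_BT.
Qed.
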